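(* Let $\mathcal{G}$ be the information-flow graph of a single-sender single-uniprior index-coding instance and fix any index code for it with encoding function $E$. For every receiver $i$ and every predecessor $j$ of $i$ in $\mathcal{G}$, the message $x_j$ is a function of $(E(x_1,\dots,x_n), x_i)$; i.e., receiver $i$ can decode the messages of all its predecessors.
   Context: Single-sender single-uniprior index coding: there are $n$ receivers and $n$ independent messages $x_1,\dots,x_n$; message $x_i$ consists of $q_i\ge 1$ bits, each independently uniformly distributed on $\{0,1\}$. A single sender knows all messages. Receiver $i$ knows $x_i$ a priori and requests a set $\mathcal{W}_i$ of messages with $x_i\notin\mathcal{W}_i$. The information-flow graph is the directed graph $\mathcal{G}=(\mathcal{V},\mathcal{A})$ with $\mathcal{V}=\{1,\dots,n\}$ and an arc $(j\to i)\in\mathcal{A}$ iff $x_j\in\mathcal{W}_i$. An index code of length $\ell$ consists of an encoding function $E:\{0,1\}^{\sum_i q_i}\to\{0,1\}^\ell$ and, for each receiver $i$, a decoding function $D_i$ such that $D_i(E(x_1,\dots,x_n),x_i)$ equals the tuple of messages in $\mathcal{W}_i$ for all values of the messages. A vertex $j$ is a predecessor of vertex $i$ iff there is a directed path in $\mathcal{G}$ from $j$ to $i$. *)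

From mathcomp Require Import all_boot.
Set Implicit Arguments. Unset Strict Implicit. Unset Printing Implicit Defensive.

Definition messages (n : nat) (q : 'I_n -> nat) : Type :=
  forall i : 'I_n, (q i).-tuple bool.

Definition ifg_arc (n : nat) (W : 'I_n -> {set 'I_n}) : rel 'I_n :=
  fun j i => j \in W i.

Definition predecessor (n : nat) (W : 'I_n -> {set 'I_n}) (j i : 'I_n) : Prop :=
  exists2 p : seq 'I_n, path (ifg_arc W) j p & (p != [::]) && (last j p == i).

(* D i c y j is the component of the decoded tuple for message j
   (only components with j \in W i are constrained). *)
Definition is_index_code (n : nat) (q : 'I_n -> nat) (W : 'I_n -> {set 'I_n})
  (l : nat) (E : messages q -> l.-tuple bool)
  (D : forall i : 'I_n, l.-tuple bool -> (q i).-tuple bool ->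
         forall j : 'I_n, (q j).-tuple bool) : Prop :=
  forall (x : messages q) (i j : 'I_n), j \in W i -> D i (E x) (x i) j = x j.

From mathcomp Require Import all_boot.

Set Implicit Arguments.
Unset Strict Implicit.

(* Receiver decodability composes: if receiver [i] can recover [x_a], it can
   run the decoder of receiver [a] on the codeword and the recovered [x_a].
   Along a path of the information-flow graph every arc is such a step. *)

Section Decodability.

Variables (n : nat) (q : 'I_n -> nat) (l : nat) (E : messages q -> l.-tuple bool).

Definition decodable (i j : 'I_n) : Prop :=
  exists f : l.-tuple bool -> (q i).-tuple bool -> (q j).-tuple bool,
    forall x : messages q, f (E x) (x i) = x j.

Lemma decodable_refl i : decodable i i.
Proof. by exists (fun _ y => y). Qed.

Lemma decodable_trans i a j : decodable i a -> decodable a j -> decodable i j.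
Proof.
move=> [f hf] [g hg]; exists (fun c y => g c (f c y)) => x.
by rewrite hf hg.
Qed.

Variables (W : 'I_n -> {set 'I_n})
  (D : forall i : 'I_n, l.-tuple bool -> (q i).-tuple bool ->
         forall j : 'I_n, (q j).-tuple bool).
Hypothesis hcode : is_index_code W E D.

Lemma decodable_arc j i : ifg_arc W j i -> decodable i j.
Proof. by move=> hji; exists (fun c y => @D i c y j) => x; apply: hcode. Qed.

Lemma decodable_path j p : path (ifg_arc W) j p -> decodable (last j p) j.
Proof.
elim: p j => [|a p IH] j /=; first by move=> _; apply: decodable_refl.
by case/andP=> hja /IH hp; apply: decodable_trans hp (decodable_arc hja).
Qed.

End Decodability.

Theorem lemma1 (n : nat) (q : 'I_n -> nat) (W : 'I_n -> {set 'I_n})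
  (hq : forall i, 0 < q i) (huni : forall i, i \notin W i)
  (l : nat) (E : messages q -> l.-tuple bool)
  (D : forall i : 'I_n, l.-tuple bool -> (q i).-tuple bool ->
         forall j : 'I_n, (q j).-tuple bool)
  (hcode : is_index_code W E D) :
  forall i j : 'I_n, predecessor W j i ->
    exists f : l.-tuple bool -> (q i).-tuple bool -> (q j).-tuple bool,
      forall x : messages q, f (E x) (x i) = x j.
Proof.
move=> i j [p hp /andP [_ /eqP <-]].
exact: (decodable_path hcode hp).
Qed.
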